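(* Fix $y_0\in Y$. (a) A pair $(\bar\psi,\bar\eta)\in C(Y)\times C(Y)$ is an optimal solution of the dual problem if and only if both of the following hold: - $\bar\psi(f(y,u))-\bar\psi(y)\ge0$ for all $(y,u)\in G$; - $\min_{(y,u)\in G}\{k(y,u)-\bar\psi(y)+\bar\eta(f(y,u))-\bar\eta(y)\}=V(y_0)-\bar\psi(y_0)$. (b) If $\bar\eta\in C(Y)$ satisfies $\min_{(y,u)\in G}\{k(y,u)-V(y)+\bar\eta(f(y,u))-\bar\eta(y)\}=0$, then the pair $(V,\bar\eta)$ is an optimal solution of the dual problem.
   Context: Let $Y\subset\mathbb{R}^m$ be nonempty compact, $U_0$ a compact metric space, $U(\cdot):Y\rightsquigarrow U_0$ upper semicontinuous and compact-valued, and $f:\mathbb{R}^m\times U_0\to\mathbb{R}^m$, $k:\mathbb{R}^m\times U_0\to\mathbb{R}$ continuous. Put $A(y):=\{u\in U(y): f(y,u)\in Y\}$ and $G:=\{(y,u):y\in Y,\ u\in A(y)\}$. Standing assumption: $A(y)\ne\emptyset$ for all $y\in Y$. For $y_0\in Y$, let $\mathcal U_T(y_0)$ be the set of controls $u(0),\dots,u(T-1)$ with $u(t)\in A(y(t))$, where $y(0)=y_0$ and $y(t+1)=f(y(t),u(t))$. Define $V_T(y_0):=\frac1T\min_{u\in\mathcal U_T(y_0)}\sum_{t=0}^{T-1}k(y(t),u(t))$. Standing assumption of this result: for every $y\in Y$ the limit $V(y):=\lim_{T\to\infty}V_T(y)$ exists, and $V$ is continuous on $Y$. Dual problem: $d^*(y_0):=\sup\mu$,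 where the supremum is over triples $(\mu,\psi,\eta)\in\mathbb{R}\times C(Y)\times C(Y)$ with, for all $(y,u)\in G$: $$k(y,u)+\psi(y_0)-\psi(y)+\eta(f(y,u))-\eta(y)-\mu\ge0,\qquad\psi(f(y,u))-\psi(y)\ge0.$$ A pair $(\bar\psi,\bar\eta)\in C(Y)\times C(Y)$ is called an optimal solution of the dual problem if for all $(y,u)\in G$: $$k(y,u)+\bar\psi(y_0)-\bar\psi(y)+\bar\eta(f(y,u))-\bar\eta(y)\ge d^*(y_0),\qquad\bar\psi(f(y,u))-\bar\psi(y)\ge0.$$ *)

From HB Require Import structures.
From mathcomp Require Import all_boot all_order all_algebra.
From mathcomp Require Import all_classical all_reals all_analysis.
Set Implicit Arguments. Unset Strict Implicit. Unset Printing Implicit Defensive.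
Import Order.TTheory GRing.Theory Num.Theory.
Import numFieldNormedType.Exports.
Local Open Scope classical_set_scope.
Local Open Scope ring_scope.

Section Defs.
Variables (R : realType) (m : nat) (U0 : pseudoMetricType R).
Variables (Y : set 'rV[R]_m) (U : 'rV[R]_m -> set U0)
          (f : 'rV[R]_m -> U0 -> 'rV[R]_m) (k : 'rV[R]_m -> U0 -> R).

Definition usc_on : Prop :=
  forall y, Y y -> forall O : set U0, open O -> U y `<=` O ->
    \forall y' \near y, Y y' -> U y' `<=` O.

Definition Aset (y : 'rV[R]_m) : set U0 := [set u | U y u /\ Y (f y u)].

Definition Gset : set ('rV[R]_m * U0) := [set p | Y p.1 /\ Aset p.1 p.2].

Fixpoint traj (y0 : 'rV[R]_m) (u : nat -> U0) (t : nat) : 'rV[R]_m :=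
  match t with 0 => y0 | t'.+1 => f (traj y0 u t') (u t') end.

Definition admissible (T : nat) (y0 : 'rV[R]_m) (u : nat -> U0) : Prop :=
  forall t, (t < T)%N -> Aset (traj y0 u t) (u t).

(* V_T(y0) = (1/T) min_{u admissible} sum_{t<T} k(y(t),u(t))  (the min is
   attained under the standing hypotheses; written as inf) *)
Definition VT (T : nat) (y0 : 'rV[R]_m) : R :=
  (T%:R)^-1 * inf [set \sum_(t < T) k (traj y0 u t) (u t) | u in admissible T y0].

Definition dual_feasible (y0 : 'rV[R]_m) (mu : R) (psi eta : 'rV[R]_m -> R) : Prop :=
  {within Y, continuous psi} /\ {within Y, continuous eta} /\
  forall p, Gset p ->
    0 <= k p.1 p.2 + psi y0 - psi p.1 + eta (f p.1 p.2) - eta p.1 - mu /\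
    0 <= psi (f p.1 p.2) - psi p.1.

Definition dstar (y0 : 'rV[R]_m) : \bar R :=
  ereal_sup [set mu%:E | mu in [set mu | exists psi eta, dual_feasible y0 mu psi eta]].

Definition dual_optimal (y0 : 'rV[R]_m) (psi eta : 'rV[R]_m -> R) : Prop :=
  forall p, Gset p ->
    (dstar y0 <= (k p.1 p.2 + psi y0 - psi p.1 + eta (f p.1 p.2) - eta p.1)%:E)%E /\
    0 <= psi (f p.1 p.2) - psi p.1.

End Defs.

Definition is_min_on {T} {R : realType} (S : set T) (g : T -> R) (v : R) : Prop :=
  (exists2 p, S p & g p = v) /\ (forall p, S p -> v <= g p).

(* Weak duality: along an admissible trajectory from y0 the dual constraints
   telescope to  sum_{t<T} k >= T mu - 2 max|eta|  (psi cannot decrease), so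
   mu <= V y0.  Conversely, for every eps > 0 the triple (V y0 - eps, V, eta)
   is feasible, where eta(y) is the least excess k - V + eps accumulated along
   d-pseudo-orbits started near y.  This infimum is finite: otherwise, by
   Tychonoff, orbits with ever smaller defects accumulate on an exact trajectory
   along which every partial sum of the excess is <= 0; but past a time where V
   is eps-close to its supremum along that trajectory, the average cost of the
   tail stays below sup V - eps, contradicting V = lim V_T.  Hence d*(y0) = V y0,
   and both parts compare the minimum of the dual residual over the compact set
   G with V y0 - psi y0. *)

From Pilot Require Import Defs.
From HB Require Import structures.
From mathcomp Require Import all_boot all_order all_algebra.
From mathcomp Require Import all_classical all_reals all_analysis.
From mathcomp Require Import zify lra.
Import Order.TTheory GRing.Theory Num.Theory.
Import numFieldNormedType.Exports.
Local Open Scope classical_set_scope.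
Local Open Scope ring_scope.
Set Implicit Arguments.
Unset Strict Implicit.

Lemma bounded_on_compact {T : topologicalType} {R : realType} (A : set T) (g : T -> R) :
  compact A -> {within A, continuous g} -> exists M, forall x, A x -> `|g x| <= M.
Proof.
move=> cA cg; have [M [_ HM]] := compact_bounded (continuous_compact cg cA).
by exists (M + 1) => x Ax; apply: (HM (M + 1)); [rewrite ltrDl | exists x].
Qed.

Lemma within_continuous_near {T : topologicalType} {R : realType} (A : set T)
    (g : T -> R) x e :
  {within A, continuous g} -> A x -> 0 < e ->
  \forall z \near x, A z -> `|g x - g z| < e.
Proof.
move=> cg Ax e0; have /cvgr_dist_lt/(_ e e0) near_x := cg x.
have : nbhs_subspace (A := A) x [set z | `|g x - g z| < e] := near_x.
by rewrite -(nbhs_subspace_in Ax).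
Qed.

Lemma within_continuous_comp_into {X Y Z : topologicalType} (A : set X) (B : set Y)
    (g : X -> Y) (h : Y -> Z) :
  continuous g -> (forall x, A x -> B (g x)) -> {within B, continuous h} ->
  {within A, continuous (h \o g)}.
Proof.
move=> cg AB /subspace_continuousP ch; apply/subspace_continuousP => x Ax.
apply: cvg_comp (ch _ (AB _ Ax)) => W /= BW.
have gBW : \forall z \near x, B (g z) -> W (g z) := cg x _ BW.
by apply: filterS gBW => z gW Az; exact: gW (AB _ Az).
Qed.

Lemma nbhs_setX {X Z : topologicalType} (x : X) (z : Z) A B :
  nbhs x A -> nbhs z B -> nbhs (x, z) (A `*` B).
Proof. by move=> xA zB; exists (A, B). Qed.

Lemma cluster_le_within {T : topologicalType} {R : realType} (A : set T) (h : T -> R)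
    (s : nat -> T) (q : T) (a : R) :
  {within A, continuous h} -> A q -> cluster (s @ \oo) q ->
  (forall e, 0 < e -> \forall n \near \oo, A (s n) /\ h (s n) <= a + e) -> h q <= a.
Proof.
move=> ch Aq clq sa; apply/ler_addgt0Pr => e e0.
have e2 : 0 < e / 2 by rewrite divr_gt0.
have [x [[Ax hx] hq]] :=
  clq [set x | A x /\ h x <= a + e / 2] _ (sa _ e2) (within_continuous_near ch Aq e2).
have := hq Ax; have := splitr e; rewrite ltr_norml; lra.
Qed.

Lemma lipschitz_continuous (R : realType) (W : normedModType R) (g : W -> R) (L : R) :
  0 <= L -> (forall x y, g x <= g y + L * `|x - y|) -> continuous g.
Proof.
move=> L0 gL y; apply/cvgrPdist_lt => e e0.
have eL : 0 < e / (L + 1) by rewrite divr_gt0 //; lra.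
near=> z.
have yz : `|y - z| < e / (L + 1) by near: z; exact: cvgr_dist_lt.
have Lyz : L * `|y - z| < e.
  apply: le_lt_trans (_ : (L + 1) * `|y - z| < e); first by rewrite ler_wpM2r //; lra.
  by rewrite mulrC -ltr_pdivlMr //; lra.
have := gL y z; have := gL z y; rewrite distrC ltr_norml; lra.
Unshelve. all: by end_near.
Qed.

Lemma ler_cvg_slope (R : realType) (u v : nat -> R) (a b C : R) :
  u @ \oo --> a -> v @ \oo --> b ->
  (forall n, n.+1%:R * u n.+1 <= n.+1%:R * v n.+1 + C) -> a <= b.
Proof.
move=> ua vb uv.
have vC : (fun n => v n.+1 + C * harmonic n) @ \oo --> b.
  rewrite -[b]addr0 -(mulr0 C); apply: cvgD; last exact: cvgMr cvg_harmonic.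
  by rewrite (cvg_shiftS v).
have uS : (fun n => u n.+1) @ \oo --> a by rewrite (cvg_shiftS u).
apply: (ler_cvg_to uS vC).
apply: nearW => n /=; rewrite -(@ler_pM2l _ n.+1%:R) // mulrDr mulrCA mulfV ?mulr1 //.
Qed.

Lemma ler_sum_const (R : numDomainType) (a : nat -> R) (c : R) n :
  (forall t, (t < n)%N -> c <= a t) -> n%:R * c <= \sum_(t < n) a t.
Proof.
have -> : n%:R * c = \sum_(t < n) c by rewrite sumr_const card_ord mulr_natl.
by move=> ac; apply: ler_sum => t _; exact: ac.
Qed.

Lemma long_nonpos_run (R : realType) (a : nat -> R) (K : R) (N n : nat) :
  0 <= K -> (forall t, (t < N)%N -> - K <= a t) ->
  \sum_(t < N) a t < - (n%:R * K) ->
  exists2 j0, (j0 + n < N)%N &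
    forall j, (j0 + j <= N)%N -> \sum_(t < j) a (j0 + t)%N <= 0.
Proof.
move=> K0 aK aN; pose S j := \sum_(t < j) a t.
have S_split i j : S (i + j)%N = S i + \sum_(t < j) a (i + t)%N.
  by rewrite /S big_split_ord.
have [j0 _ j0max] := @arg_maxP _ R 'I_N.+1 ord0 xpredT (fun j => S j) isT.
have j0N : (j0 <= N)%N by rewrite -ltnS.
exists j0 => [|j j0j]; last first.
  by have := j0max (Ordinal (j0j : j0 + j < N.+1)%N) isT; rewrite /= S_split; lra.
rewrite ltnNge; apply/negP => Nj0n.
have S0 : 0 <= S j0 by have := j0max ord0 isT; rewrite /S big_ord0.
have tail_lb : - ((N - j0)%:R * K) <= \sum_(t < N - j0) a (j0 + t)%N.
  rewrite -mulrN; apply: (@ler_sum_const R (fun t => a (j0 + t)%N) (- K) (N - j0)) => t t_lt.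
  by apply: aK; rewrite -ltn_subRL.
have : (N - j0)%:R * K <= n%:R * K by rewrite ler_wpM2r // ler_nat leq_subLR.
have := S_split j0 (N - j0)%N; rewrite subnKC // -/(S N) in aN *; lra.
Qed.

Definition scons {T} (a : T) (s : nat -> T) t := if t is t'.+1 then s t' else a.

Section OptimalControl.
Variables (R : realType) (m : nat) (U0 : pseudoMetricType R).
Variables (Y : set 'rV[R]_m) (U : 'rV[R]_m -> set U0)
  (f : 'rV[R]_m -> U0 -> 'rV[R]_m) (k : 'rV[R]_m -> U0 -> R).

Local Notation P := ('rV[R]_m * U0)%type.
Local Notation A := (Aset Y U f).
Local Notation G := (Gset Y U f).
Local Notation traj := (traj f).
Local Notation admissible := (admissible Y U f).
Local Notation VT := (VT Y U f k).
Local Notation cost T y u := (\sum_(t < T) k (traj y u t) (u t)).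

Lemma admissible_in_Y T y u :
  Y y -> admissible T y u -> forall t, (t <= T)%N -> Y (traj y u t).
Proof. by move=> Yy adm; elim=> [//|t IH] tT; have [] := adm t tT. Qed.

Lemma admissibleW T y u : admissible T.+1 y u -> admissible T y u.
Proof. by move=> adm t tT; apply: adm; exact: ltnW. Qed.

Lemma traj_scons y a u t : traj y (scons a u) t.+1 = traj (f y a) u t.
Proof. by elim: t => [//|t IH]; exact: (congr1 (f^~ (u t)) IH). Qed.

Lemma admissible_scons T y a u :
  A y a -> admissible T (f y a) u -> admissible T.+1 y (scons a u).
Proof. by move=> Aya adm [_|t tT] //; rewrite traj_scons; exact: adm. Qed.

Lemma cost_scons T y a u : cost T.+1 y (scons a u) = k y a + cost T (f y a) u.
Proof. by rewrite big_ord_recl; congr (_ + _); apply: eq_bigr => t _; rewrite traj_scons. Qed.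

Hypothesis A_neq0 : forall y, Y y -> A y !=set0.

Lemma admissible_exists T y : Y y -> exists u, admissible T y u.
Proof.
elim: T y => [|T IH] y Yy; have [a Aya] := A_neq0 Yy; first by exists (fun=> a).
have [u adm] := IH _ Aya.2.
by exists (scons a u); exact: admissible_scons.
Qed.

Hypothesis Y_compact : compact Y.
Hypothesis U0_compact : compact [set: U0].
Hypothesis k_cont : continuous (fun p : P => k p.1 p.2).

Lemma k_bounded : exists K, forall y a, Y y -> `|k y a| <= K.
Proof.
have [K kK] := bounded_on_compact (compact_setX Y_compact U0_compact)
  (continuous_subspaceT k_cont).
by exists K => y a Yy; exact: (kK (y, a)).
Qed.

Lemma cost_ge K T y u : (forall y a, Y y -> `|k y a| <= K) ->
  Y y -> admissible T y u -> T%:R * - K <= cost T y u.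
Proof.
move=> kK Yy adm; apply: (@ler_sum_const _ (fun t => k (traj y u t) (u t))) => t tT.
by have := kK _ (u t) (admissible_in_Y Yy adm (ltnW tT)); rewrite ler_norml => /andP[].
Qed.

Definition path_costs T y := [set cost T y u | u in admissible T y].
Definition min_cost T y := inf (path_costs T y).

Lemma mulVT T y : T.+1%:R * VT T.+1 y = min_cost T.+1 y.
Proof. by rewrite /Defs.VT mulVKf // pnatr_eq0. Qed.

Lemma min_cost_le T y u : Y y -> admissible T y u -> min_cost T y <= cost T y u.
Proof.
move=> Yy adm; apply: ge_inf; last by exists u.
have [K kK] := k_bounded.
by exists (T%:R * - K) => _ [v admv <-]; exact: cost_ge.
Qed.

Lemma le_min_cost T y c : Y y ->
  (forall u, admissible T y u -> c <= cost T y u) -> c <= min_cost T y.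
Proof.
move=> Yy c_le; apply: lb_le_inf; last by move=> _ [u adm <-]; exact: c_le.
by have [u adm] := admissible_exists T Yy; exists (cost T y u), u.
Qed.

Lemma min_cost_scons T y a :
  Y y -> A y a -> min_cost T.+1 y <= k y a + min_cost T (f y a).
Proof.
move=> Yy Aya; rewrite addrC -lerBlDr; apply: le_min_cost => [|u adm]; first exact: Aya.2.
rewrite lerBlDr addrC -cost_scons; apply: min_cost_le => //.
exact: admissible_scons.
Qed.

Lemma min_cost_succ K T y : (forall y a, Y y -> `|k y a| <= K) ->
  Y y -> min_cost T y - K <= min_cost T.+1 y.
Proof.
move=> kK Yy; apply: le_min_cost => // u adm; rewrite big_ord_recr /=.
have := min_cost_le Yy (admissibleW adm).
have := kK _ (u T) (admissible_in_Y Yy adm (leqnSn T)); rewrite ler_norml.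
move=> /andP[? _]; lra.
Qed.

Variable V : 'rV[R]_m -> R.
Hypothesis VT_cvg : forall y, Y y -> (fun T : nat => VT T y) @ \oo --> V y.

Lemma V_le_of_cost_ub y u c C : Y y -> (forall T, admissible T y u) ->
  (forall T, cost T y u <= T%:R * c + C) -> V y <= c.
Proof.
move=> Yy adm cu; apply: (ler_cvg_slope (VT_cvg Yy) (cvg_cst c)) => n.
by rewrite mulVT; apply: le_trans (cu n.+1); exact: min_cost_le.
Qed.

Lemma le_V_of_cost_lb y c C : Y y ->
  (forall T u, admissible T y u -> T%:R * c - C <= cost T y u) -> c <= V y.
Proof.
move=> Yy cu; apply: (ler_cvg_slope (cvg_cst c) (VT_cvg Yy) (C := C)) => n.
by rewrite mulVT -lerBlDr; apply: le_min_cost => // u; exact: cu.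
Qed.

Lemma V_step_mono y a : Y y -> A y a -> V y <= V (f y a).
Proof.
move=> Yy Aya; have [K kK] := k_bounded.
apply: (ler_cvg_slope (VT_cvg Yy) (VT_cvg Aya.2) (C := K + K)) => n.
rewrite !mulVT; have := min_cost_scons n Yy Aya; have := min_cost_succ n kK Aya.2.
by have := kK y a Yy; rewrite ler_norml => /andP[_ ?]; lra.
Qed.

Section WeakDuality.
Variables (y0 : 'rV[R]_m) (mu : R) (psi eta : 'rV[R]_m -> R).
Hypothesis y0Y : Y y0.
Hypothesis feasible : dual_feasible Y U f k y0 mu psi eta.

Lemma feasible_psi_ge T u : admissible T y0 u ->
  forall t, (t <= T)%N -> psi y0 <= psi (traj y0 u t).
Proof.
have [_ [_ feas]] := feasible; move=> adm; elim=> [//|t IH tT].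
have yt := admissible_in_Y y0Y adm (ltnW tT).
have [_] := feas (traj y0 u t, u t) (conj yt (adm t tT)).
by rewrite subr_ge0; apply: le_trans (IH (ltnW tT)).
Qed.

Lemma feasible_cost_ge T u : admissible T y0 u ->
  T%:R * mu + eta y0 - eta (traj y0 u T) <= cost T y0 u.
Proof.
elim: T => [_|T IH adm]; first by rewrite big_ord0 mul0r add0r subrr.
have yT := admissible_in_Y y0Y adm (leqnSn T).
have [_ [_ /(_ (traj y0 u T, u T) (conj yT (adm T (ltnSn T))))[step _]]] := feasible.
have := feasible_psi_ge adm (leqnSn T); have := IH (admissibleW adm).
move: step; rewrite big_ord_recr -natr1 mulrDl mul1r [traj _ _ T.+1]/= /=; lra.
Qed.

Lemma feasible_le_V : mu <= V y0.
Proof.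
have [_ [eta_cont _]] := feasible.
have [M etaM] := bounded_on_compact Y_compact eta_cont.
apply: (le_V_of_cost_lb (C := M + M) y0Y) => T u adm.
apply: le_trans (feasible_cost_ge adm).
have := etaM _ y0Y; have := etaM _ (admissible_in_Y y0Y adm (leqnn T)).
by rewrite !ler_norml => /andP[? ?] /andP[? ?]; lra.
Qed.

End WeakDuality.

Hypothesis Y_neq0 : Y !=set0.
Hypothesis U0_hausdorff : hausdorff_space U0.
Hypothesis U_compact : forall y, Y y -> compact (U y).
Hypothesis U_usc : usc_on Y U.
Hypothesis f_cont : continuous (fun p : P => f p.1 p.2).

Lemma G_neq0 : G !=set0.
Proof. by have [y Yy] := Y_neq0; have [a Aya] := A_neq0 Yy; exists (y, a). Qed.

Lemma graph_U_closed : closed [set p : P | Y p.1 /\ U p.1 p.2].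
Proof.
have Y_closed := compact_closed (@norm_hausdorff _ _) Y_compact.
move=> [y a] cl_ya.
have Yy : Y y.
  apply: Y_closed => B yB.
  have [q [[Yq _] [Bq _]]] := cl_ya _ (nbhs_setX yB (@filterT _ (nbhs a) _)).
  by exists q.1.
split => //=; apply: contrapT => Uya.
have a_out : nbhs a (~` U y).
  apply: open_nbhs_nbhs; split => //; apply: closed_openC.
  exact: compact_closed U0_hausdorff (U_compact Yy).
have [B aB clB] := uniform_regular a_out.
have UB : U y `<=` ~` closure B by move=> z Uz /clB.
have near_y := U_usc Yy (closed_openC (@closed_closure _ B)) UB.
have [[z b] [[Yz Uzb] [zU bB]]] := cl_ya _ (nbhs_setX near_y aB).
exact: zU Yz _ Uzb (subset_closure bB).
Qed.

Lemma G_compact : compact G.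
Proof.
apply: (subclosed_compact _ (compact_setX Y_compact U0_compact)); last first.
  by move=> p [Yp _].
have -> : G = [set p | Y p.1 /\ U p.1 p.2] `&` (fun p : P => f p.1 p.2) @^-1` Y.
  by apply/seteqP; split => [p [Yp [Up Yf]]|p [[Yp Up] Yf]].
apply: closedI; first exact: graph_U_closed.
by apply: preimage_closed; [move=> ? _; exact: f_cont | exact: compact_closed Y_compact].
Qed.

Lemma continuous_on_G_fst (h : 'rV[R]_m -> R) :
  {within Y, continuous h} -> {within G, continuous (fun p : P => h p.1)}.
Proof. by apply: within_continuous_comp_into (fun _ => cvg_fst) _ => p []. Qed.

Lemma continuous_on_G_next (h : 'rV[R]_m -> R) :
  {within Y, continuous h} -> {within G, continuous (fun p : P => h (f p.1 p.2))}.
Proof. by apply: within_continuous_comp_into f_cont _ => p [_ []]. Qed.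

Definition dual_residual (psi eta : 'rV[R]_m -> R) (p : P) :=
  k p.1 p.2 - psi p.1 + eta (f p.1 p.2) - eta p.1.

Lemma dual_residual_min psi eta :
  {within Y, continuous psi} -> {within Y, continuous eta} ->
  exists2 p, G p & forall q, G q -> dual_residual psi eta p <= dual_residual psi eta q.
Proof.
move=> psi_c eta_c.
have res_c : {within G, continuous dual_residual psi eta}.
  move=> p; apply: cvgB; [apply: cvgD; [apply: cvgB|]|].
  - exact: continuous_subspaceT k_cont p.
  - exact: continuous_on_G_fst psi_c p.
  - exact: continuous_on_G_next eta_c p.
  - exact: continuous_on_G_fst eta_c p.
have [p /set_mem Gp p_min] := compact_EVT_min G_neq0 G_compact res_c.
by exists p => // q Gq; apply: p_min; rewrite inE.
Qed.

Hypothesis V_cont : {within Y, continuous V}.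

Definition excess eps (p : P) := k p.1 p.2 - V p.1 + eps.

Lemma excess_bounded eps :
  exists2 Ke, 0 <= Ke & forall p, Y p.1 -> `|excess eps p| <= Ke.
Proof.
have [K kK] := k_bounded; have [M VM] := bounded_on_compact Y_compact V_cont.
exists (`|K| + `|M| + `|eps|) => // p Yp.
apply: le_trans (ler_normD _ _) _; rewrite lerD2r.
apply: le_trans (ler_normB _ _) _; apply: lerD.
  exact: le_trans (kK _ _ Yp) (ler_norm K).
exact: le_trans (VM _ Yp) (ler_norm M).
Qed.

Lemma excess_continuous eps : {within G, continuous excess eps}.
Proof.
move=> p; apply: cvgD; last exact: cvg_cst.
apply: cvgB; first exact: continuous_subspaceT k_cont p.
exact: continuous_on_G_fst V_cont p.
Qed.

Definition pseudo_orbit d N (s : nat -> P) :=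
  (forall t, (t < N)%N -> G (s t)) /\
  (forall t, (t.+1 < N)%N -> `|(s t.+1).1 - f (s t).1 (s t).2| <= d).

Section ChainValue.
Variables (eps d L B : R).
Hypothesis L_ge0 : 0 <= L.
Hypothesis orbit_excess_ge :
  forall N s, pseudo_orbit d N s -> - B <= \sum_(t < N) excess eps (s t).

(* The least excess accumulated along a d-pseudo-orbit, plus the penalty
   L |s_0 - y| for jumping from y to its start: the penalty makes it L-Lipschitz,
   and prepending p to an orbit that starts d-close to f(p) gives the Bellman
   inequality [chain_value_step]. *)
Definition chain_values y :=
  [set L * `|(Ns.2 0%N).1 - y| + \sum_(t < Ns.1) excess eps (Ns.2 t)
     | Ns in [set Ns : nat * (nat -> P) | pseudo_orbit d Ns.1 Ns.2]].
Definition chain_value y := inf (chain_values y).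

Lemma chain_values_ge y : lbound (chain_values y) (- B).
Proof.
move=> _ [[N s] orb <-] /=; have := orbit_excess_ge orb.
have : 0 <= L * `|(s 0%N).1 - y| by rewrite mulr_ge0.
lra.
Qed.

Lemma chain_values0 y : chain_values y 0.
Proof.
have [[_ a] _] := G_neq0; exists (0%N, fun=> (y, a)); first by split.
by rewrite /= subrr normr0 mulr0 big_ord0 addr0.
Qed.

Lemma chain_value_ge_inf y x : chain_values y x -> chain_value y <= x.
Proof. by apply: ge_inf; exists (- B); exact: chain_values_ge. Qed.

Lemma chain_value_le0 y : chain_value y <= 0.
Proof. exact/chain_value_ge_inf/chain_values0. Qed.

Lemma le_chain_value y c :
  (forall N s, pseudo_orbit d N s ->
     c <= L * `|(s 0%N).1 - y| + \sum_(t < N) excess eps (s t)) ->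
  c <= chain_value y.
Proof.
move=> c_le; apply: lb_le_inf; first by exists 0; exact: chain_values0.
by move=> _ [[N s] orb <-]; exact: c_le.
Qed.

Lemma chain_value_lipschitz y z : chain_value y <= chain_value z + L * `|y - z|.
Proof.
rewrite -lerBlDr; apply: le_chain_value => N s orb; rewrite lerBlDr.
apply: le_trans (chain_value_ge_inf (ex_intro2 _ _ (N, s) orb erefl)) _ => /=.
have := ler_wpM2l L_ge0 (ler_distD z (s 0%N).1 y).
by rewrite (distrC z y) mulrDr; lra.
Qed.

Lemma chain_value_continuous : continuous chain_value.
Proof. exact: lipschitz_continuous L_ge0 chain_value_lipschitz. Qed.

Variable Ke : R.
Hypothesis excess_le : forall p, G p -> `|excess eps p| <= Ke.
Hypothesis L_large : B + Ke <= L * d.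

Lemma chain_value_step p :
  G p -> chain_value p.1 <= excess eps p + chain_value (f p.1 p.2).
Proof.
move=> Gp; rewrite -lerBlDl; apply: le_chain_value => N s orb; rewrite lerBlDl.
have := orbit_excess_ge orb; have jump_ge0 : 0 <= L * `|(s 0%N).1 - f p.1 p.2|.
  by rewrite mulr_ge0.
have [near|far] := lerP `|(s 0%N).1 - f p.1 p.2| d.
  have orb' : pseudo_orbit d N.+1 (scons p s).
    by split=> -[|t] tN //; [exact: orb.1 | exact: orb.2].
  have := chain_value_ge_inf (y := p.1) (ex_intro2 _ _ (N.+1, scons p s) orb' erefl).
  by rewrite /= subrr normr0 mulr0 add0r big_ord_recl; lra.
have := excess_le Gp; rewrite ler_norml => /andP[? _].
have := le_trans L_large (ler_wpM2l L_ge0 (ltW far)); have := chain_value_le0 p.1; lra.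
Qed.

End ChainValue.

Lemma trajectory_excess_sum_pos eps q : 0 < eps -> (forall t, G (q t)) ->
  (forall t, (q t.+1).1 = f (q t).1 (q t).2) ->
  exists j, 0 < \sum_(t < j) excess eps (q t).
Proof.
move=> eps_gt0 Gq q_traj; apply: contrapT => /forallNP S_gt0.
have S_le0 j : \sum_(t < j) excess eps (q t) <= 0 by rewrite leNgt; exact/negP.
pose Vq := [set V (q t).1 | t in [set: nat]].
have [M VM] := bounded_on_compact Y_compact V_cont.
have Vq_ub : has_ubound Vq.
  by exists M => _ [t _ <-]; apply: le_trans (ler_norm _) (VM _ (Gq t).1).
have Vq_le t : V (q t).1 <= sup Vq by apply: (ub_le_sup Vq_ub); exists t.
have Vq_sup : has_sup Vq by split; first by exists (V (q 0%N).1), 0%N.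
have [_ [s _ <-] Vs_gt] := sup_adherent eps_gt0 Vq_sup.
have [Ke _ excess_le] := excess_bounded eps.
pose u t := (q (s + t)%N).2.
have traj_u t : traj (q s).1 u t = (q (s + t)%N).1.
  by elim: t => [|t IH]; rewrite ?addn0 // addnS q_traj -IH.
have adm T : admissible T (q s).1 u by move=> t _; rewrite traj_u; exact: (Gq _).2.
(* from time s on, the tail of q costs at most T (sup Vq - eps) + s Ke *)
suff : V (q s).1 <= sup Vq - eps by lra.
apply: (V_le_of_cost_ub (C := s%:R * Ke) (Gq s).1 adm) => T.
have head_ge : s%:R * - Ke <= \sum_(t < s) excess eps (q t).
  apply: (@ler_sum_const _ (fun t => excess eps (q t))) => t _.
  by have := excess_le _ (Gq t).1; rewrite ler_norml => /andP[].
have := S_le0 (s + T)%N; rewrite big_split_ord /= => S_sT.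
have cost_le :
    cost T (q s).1 u <= \sum_(t < T) (excess eps (q (s + t)%N) + (sup Vq - eps)).
  by apply: ler_sum => t _; rewrite traj_u /excess; have := Vq_le (s + t)%N; lra.
move: cost_le head_ge; rewrite big_split /= sumr_const card_ord -mulr_natl mulrN; lra.
Qed.

Local Notation orbit_space := (prod_topology (fun _ : nat => P)).

Lemma partial_excess_continuous eps j :
  {within [set x : orbit_space | forall t, G (x t)],
    continuous (fun x : orbit_space => \sum_(t < j) excess eps (x t))}.
Proof.
elim: j => [|j IH] x.
  have -> : (fun x : orbit_space => \sum_(t < 0) excess eps (x t)) = fun=> 0.
    by apply/funext => y; rewrite big_ord0.
  exact: cvg_cst.
have -> : (fun x : orbit_space => \sum_(t < j.+1) excess eps (x t)) =
    (fun x => \sum_(t < j) excess eps (x t) + excess eps (x j)).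
  by apply/funext => y; rewrite big_ord_recr.
have proj_c : {within [set x : orbit_space | forall t, G (x t)],
    continuous (excess eps \o proj j)}.
  apply: (@within_continuous_comp_into orbit_space _ _ _ G); last exact: excess_continuous.
    exact: proj_continuous.
  by move=> y; apply.
apply: cvgD; [exact: IH | exact: proj_c].
Qed.

Lemma cluster_orbit_trajectory (xs : nat -> orbit_space) (q : orbit_space) :
  cluster (xs @ \oo) q ->
  (forall n t, (t < n)%N -> `|(xs n t.+1).1 - f (xs n t).1 (xs n t).2| <= harmonic n) ->
  forall t, (q t.+1).1 = f (q t).1 (q t).2.
Proof.
move=> clq steps t; apply/eqP; rewrite -subr_eq0 -normr_le0.
have step_cont : continuous (fun x : orbit_space => `|(x t.+1).1 - f (x t).1 (x t).2|).
  move=> x; apply: (@cvg_norm _ _ _ _ (nbhs_filter x)).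
  apply: (@cvgB _ _ _ _ (nbhs_filter x)).
    exact: continuous_comp (@proj_continuous _ _ t.+1 x) cvg_fst.
  exact: continuous_comp (@proj_continuous _ _ t x) (@f_cont (x t)).
apply: (cluster_le_within (A := setT) (continuous_subspaceT step_cont) I clq) => e e0.
near=> n; split => //; rewrite add0r; apply: le_trans (steps n t _) _.
  by near: n; exact: nbhs_infty_gt.
by near: n; exact: cvgr_le cvg_harmonic _ e0.
Unshelve. all: by end_near.
Qed.

Lemma cluster_orbit_sums_le0 eps (xs : nat -> orbit_space) (q : orbit_space) :
  (forall t, G (q t)) -> cluster (xs @ \oo) q -> (forall n t, G (xs n t)) ->
  (forall n j, (j <= n)%N -> \sum_(t < j) excess eps (xs n t) <= 0) ->
  forall j, \sum_(t < j) excess eps (q t) <= 0.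
Proof.
move=> Gq clq Gxs xs_le0 j.
apply: (cluster_le_within (@partial_excess_continuous eps j) Gq clq) => e e0.
near=> n; split; first exact: Gxs.
rewrite add0r; apply: le_trans (xs_le0 n j _) (ltW e0).
by near: n; exact: nbhs_infty_ge.
Unshelve. all: by end_near.
Qed.

Definition nonpos_run eps d n (x : orbit_space) := [/\ forall t, G (x t),
  forall t, (t < n)%N -> `|(x t.+1).1 - f (x t).1 (x t).2| <= d &
  forall j, (j <= n)%N -> \sum_(t < j) excess eps (x t) <= 0].

Lemma nonpos_excess_run eps d N s n Ke : 0 <= Ke ->
  (forall p, G p -> `|excess eps p| <= Ke) ->
  pseudo_orbit d N s -> \sum_(t < N) excess eps (s t) < - (n%:R * Ke) ->
  exists x, nonpos_run eps d n x.
Proof.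
move=> Ke0 excess_le [sG s_steps] S_lt.
have excess_ge t : (t < N)%N -> - Ke <= excess eps (s t).
  by move=> tN; have := excess_le _ (sG t tN); rewrite ler_norml => /andP[].
have [j0 j0n run_le0] := long_nonpos_run Ke0 excess_ge S_lt.
have [p0 Gp0] := G_neq0.
pose x t := if (j0 + t < N)%N then s (j0 + t)%N else p0.
have x_run t : (t <= n)%N -> x t = s (j0 + t)%N by move=> tn; rewrite /x ifT //; lia.
exists x; split.
- by move=> t; rewrite /x; case: ifP => // /sG.
- move=> t tn; rewrite (x_run _ tn) (x_run _ (ltnW tn)) addnS.
  by apply: s_steps; lia.
- move=> j jn.
  have -> : \sum_(t < j) excess eps (x t) = \sum_(t < j) excess eps (s (j0 + t)%N).
    by apply: eq_bigr => t _; rewrite x_run //; have := ltn_ord t; lia.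
  by apply: run_le0; lia.
Qed.

Lemma pseudo_orbit_excess_lb eps : 0 < eps -> exists2 d, 0 < d &
  exists B, forall N s, pseudo_orbit d N s -> - B <= \sum_(t < N) excess eps (s t).
Proof.
move=> eps_gt0; have [Ke Ke0 Ke_ge] := excess_bounded eps.
have excess_le p : G p -> `|excess eps p| <= Ke by move=> [Yp _]; exact: Ke_ge.
apply: contrapT => no_lb.
have run n : exists x, nonpos_run eps (harmonic n) n x.
  have [N [s [orb S_lt]]] : exists N s, pseudo_orbit (harmonic n) N s /\
      \sum_(t < N) excess eps (s t) < - (n%:R * Ke).
    apply: contrapT => no_orbit; apply: no_lb; exists (harmonic n); first exact: harmonic_gt0.
    exists (n%:R * Ke) => N s orb; rewrite leNgt; apply/negP => S_lt.
    by apply: no_orbit; exists N, s.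
  exact: nonpos_excess_run Ke0 excess_le orb S_lt.
have [xs xs_run] := choice run.
have xs_G : (xs @ \oo) [set x : orbit_space | forall t, G (x t)].
  by exists 0%N => // n _; have [] := xs_run n.
have [q [Gq clq]] := @tychonoff _ (fun=> P) (fun=> G) (fun=> G_compact) _ _ xs_G.
have steps n t : (t < n)%N -> `|(xs n t.+1).1 - f (xs n t).1 (xs n t).2| <= harmonic n.
  by have [_ + _] := xs_run n; apply.
have [j] := trajectory_excess_sum_pos eps_gt0 Gq (cluster_orbit_trajectory clq steps).
rewrite ltNge (cluster_orbit_sums_le0 Gq clq) // => [n t|n j' j'n].
  by have [+ _ _] := xs_run n; apply.
by have [_ _] := xs_run n; apply.
Qed.

Lemma approx_optimal_eta eps : 0 < eps ->
  exists eta, continuous eta /\ forall p, G p -> - eps <= dual_residual V eta p.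
Proof.
move=> eps_gt0; have [d d_gt0 [B orbit_ge]] := pseudo_orbit_excess_lb eps_gt0.
have [Ke Ke0 Ke_ge] := excess_bounded eps.
have excess_le p : G p -> `|excess eps p| <= Ke by move=> [Yp _]; exact: Ke_ge.
have B_ge0 : 0 <= B.
  have [p0 _] := G_neq0; have orb0 : pseudo_orbit d 0 (fun=> p0) by split.
  by have := orbit_ge _ _ orb0; rewrite big_ord0 oppr_le0.
pose L := (B + Ke) / d.
have L_ge0 : 0 <= L by rewrite divr_ge0 ?addr_ge0 // ltW.
have L_large : B + Ke <= L * d by rewrite divfK // gt_eqF.
exists (chain_value eps d L); split; first exact: chain_value_continuous L_ge0 orbit_ge.
move=> p Gp; have := chain_value_step L_ge0 orbit_ge excess_le L_large Gp.
by rewrite /dual_residual /excess; lra.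
Qed.

Lemma dstar_eq_V y0 : Y y0 -> dstar Y U f k y0 = (V y0)%:E.
Proof.
move=> y0Y; apply/eqP; rewrite eq_le; apply/andP; split.
  apply: ge_ereal_sup => _ [mu [psi [eta feas]] <-].
  by rewrite lee_fin; exact: feasible_le_V feas.
apply/lee_subgt0Pr => e e_gt0; rewrite -EFinB; apply: ereal_sup_ubound.
exists (V y0 - e) => //; have [eta [eta_cont eta_res]] := approx_optimal_eta e_gt0.
exists V, eta; split; first exact: V_cont.
split=> [|p Gp]; first exact: continuous_subspaceT.
split; last by rewrite subr_ge0; exact: V_step_mono Gp.1 Gp.2.
by have := eta_res p Gp; rewrite /dual_residual; lra.
Qed.

Lemma dual_optimalP y0 psi eta : Y y0 ->
  {within Y, continuous psi} -> {within Y, continuous eta} ->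
  dual_optimal Y U f k y0 psi eta <->
  (forall p, G p -> 0 <= psi (f p.1 p.2) - psi p.1) /\
  is_min_on G (dual_residual psi eta) (V y0 - psi y0).
Proof.
move=> y0Y psi_c eta_c; rewrite /dual_optimal (dstar_eq_V y0Y).
split=> [opt|[mono [_ res_ge]] p Gp]; last first.
  split; last exact: mono.
  by rewrite lee_fin; have := res_ge p Gp; rewrite /dual_residual; lra.
have res_ge p : G p -> V y0 - psi y0 <= dual_residual psi eta p.
  by move=> Gp; have [+ _] := opt p Gp; rewrite lee_fin /dual_residual; lra.
split=> [p Gp|]; first by have [_] := opt p Gp.
split=> //; have [p Gp p_min] := dual_residual_min psi_c eta_c.
exists p => //; apply/eqP; rewrite eq_le res_ge // andbT.
(* the minimum, shifted by psi y0, is a feasible dual value, so weak duality bounds it *)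
have feas : dual_feasible Y U f k y0 (dual_residual psi eta p + psi y0) psi eta.
  split=> //; split=> // q Gq; split; last by have [_] := opt q Gq.
  by have := p_min q Gq; rewrite /dual_residual; lra.
by have := feasible_le_V y0Y feas; lra.
Qed.

Lemma V_dual_optimal y0 eta : Y y0 -> {within Y, continuous eta} ->
  is_min_on G (dual_residual V eta) 0 -> dual_optimal Y U f k y0 V eta.
Proof.
move=> y0Y eta_c V_min; apply/(dual_optimalP y0Y V_cont eta_c).
split=> [p [Yp Ap]|]; first by rewrite subr_ge0; exact: V_step_mono.
by rewrite subrr.
Qed.

End OptimalControl.

Unset Implicit Arguments.
Set Strict Implicit.

Theorem proposition4p4 (R : realType) (m : nat) (U0 : pseudoMetricType R)
  (Y : set 'rV[R]_m) (U : 'rV[R]_m -> set U0)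
  (f : 'rV[R]_m -> U0 -> 'rV[R]_m) (k : 'rV[R]_m -> U0 -> R)
  (V : 'rV[R]_m -> R) (y0 : 'rV[R]_m) :
  compact Y -> Y !=set0 ->
  compact [set: U0] -> hausdorff_space U0 ->
  (forall y, Y y -> compact (U y)) -> usc_on Y U ->
  continuous (fun p : 'rV[R]_m * U0 => f p.1 p.2) ->
  continuous (fun p : 'rV[R]_m * U0 => k p.1 p.2) ->
  (forall y, Y y -> Aset Y U f y !=set0) ->
  (forall y, Y y -> (fun T : nat => VT Y U f k T y) @ \oo --> V y) ->
  {within Y, continuous V} ->
  Y y0 ->
  (forall psi eta : 'rV[R]_m -> R,
      {within Y, continuous psi} -> {within Y, continuous eta} ->
      (dual_optimal Y U f k y0 psi eta <->
        ((forall p, Gset Y U f p -> 0 <= psi (f p.1 p.2) - psi p.1) /\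
         is_min_on (Gset Y U f)
           (fun p => k p.1 p.2 - psi p.1 + eta (f p.1 p.2) - eta p.1)
           (V y0 - psi y0)))) /\
  (forall eta : 'rV[R]_m -> R, {within Y, continuous eta} ->
      is_min_on (Gset Y U f)
        (fun p => k p.1 p.2 - V p.1 + eta (f p.1 p.2) - eta p.1) 0 ->
      dual_optimal Y U f k y0 V eta).
Proof.
move=> Y_compact Y_neq0 U0_compact U0_hausdorff U_compact U_usc f_cont k_cont
  A_neq0 VT_cvg V_cont y0Y.
split=> [psi eta psi_c eta_c|eta eta_c]; first exact: dual_optimalP.
exact: V_dual_optimal.
Qed.
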